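(* Let $H$ be a reduced double-well type potential and $\beta>0$. Then \begin{enumerate} \item $F_\beta^0(\lambda_\beta)F_\beta^1(\lambda_\beta)=1$; \item $\Phi_\beta(01)=F_\beta^1(\lambda_\beta)\Phi_\beta(10)$ and $\Phi_\beta(10)=F_\beta^0(\lambda_\beta)\Phi_\beta(01)$; \item $\nu_\beta[01]=F_\beta^0(\lambda_\beta)\nu_\beta[10]$ and $\nu_\beta[10]=F_\beta^1(\lambda_\beta)\nu_\beta[01]$. \end{enumerate}
   Context: $\Sigma:=\{0,1\}^{\mathbb N}$, $\sigma$ the left shift. A reduced double-well type potential is a continuous nonnegative $H:\Sigma\to\mathbb R$ with summable variation such that $H=0$ on $[00]\cup[11]$, $H=H_n^0>0$ on $[01^n0]$, $H=H_n^1>0$ on $[10^n1]$ ($n\ge1$), and $\sum_{k\ge1}\sup_{n\ge0}|H_k^i-H_{k+n}^i|<\infty$ ($i=0,1$). $\mathcal L_\beta[\Phi](x)=e^{-\beta H(0x)}\Phi(0x)+e^{-\beta H(1x)}\Phi(1x)$; $\Phi_\beta$ the unique positive continuous eigenfunction with $\max\Phi_\beta=1$, $\lambda_\beta$ its eigenvalue, $\nu_\beta$ the unique probability with $\mathcal L_\beta^*\nu_\beta=\lambda_\beta\nu_\beta$. $\Phi_\beta$ is constant on $[01]$ and $[10]$; $\Phi_\beta(01),\Phi_\beta(10)$ denote these values. $F_\beta^i(\lambda):=\sum_{k\ge1}\lambda^{-k}e^{-\beta H_k^i}$ for $i=0,1$. *)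

From Stdlib Require Import Reals Lra Lia.
Open Scope R_scope.

(* Sigma = {0,1}^N, with 0 = false, 1 = true. *)
Definition Sigma := nat -> bool.

Definition scons (b : bool) (x : Sigma) : Sigma :=
  fun n => match n with O => b | S m => x m end.

Definition agree (n : nat) (x y : Sigma) : Prop :=
  forall i, (i < n)%nat -> x i = y i.

Definition continuous_Sigma (f : Sigma -> R) : Prop :=
  forall x eps, 0 < eps -> exists N, forall y, agree N x y -> Rabs (f y - f x) < eps.

(* summable variation: var_n(H) = sup{|H x - H y| : x,y agree on n coords}
   satisfies sum_n var_n(H) < oo, i.e. var_n is dominated by a summable sequence *)
Definition summable_variation (H : Sigma -> R) : Prop :=
  exists (v : nat -> R) (l : R),
    (forall n, 0 <= v n) /\ infinite_sum v l /\
    (forall n x y, agree n x y -> Rabs (H x - H y) <= v n).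

(* cylinder [0 1^n 0] (b = false) and [1 0^n 1] (b = true) *)
Definition cyl_well (b : bool) (n : nat) (x : Sigma) : Prop :=
  x O = b /\ (forall i, (1 <= i <= n)%nat -> x i = negb b) /\ x (S n) = b.

Definition cyl01 (x : Sigma) : Prop := x O = false /\ x 1%nat = true.
Definition cyl10 (x : Sigma) : Prop := x O = true /\ x 1%nat = false.

Definition ind01 (x : Sigma) : R :=
  if x O then 0 else if x 1%nat then 1 else 0.
Definition ind10 (x : Sigma) : R :=
  if x O then (if x 1%nat then 0 else 1) else 0.

Definition summable_tail_osc (h : nat -> R) : Prop :=
  exists (w : nat -> R) (l : R),
    (forall k, 0 <= w k) /\ infinite_sum w l /\
    (forall k n, Rabs (h (S k) - h (S k + n)%nat) <= w k).

Definition reduced_double_well (H : Sigma -> R) (h0 h1 : nat -> R) : Prop :=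
  continuous_Sigma H /\
  (forall x, 0 <= H x) /\
  summable_variation H /\
  (forall x, x O = x 1%nat -> H x = 0) /\
  (forall n, (1 <= n)%nat -> 0 < h0 n /\ forall x, cyl_well false n x -> H x = h0 n) /\
  (forall n, (1 <= n)%nat -> 0 < h1 n /\ forall x, cyl_well true n x -> H x = h1 n) /\
  summable_tail_osc h0 /\ summable_tail_osc h1.

Definition transfer (H : Sigma -> R) (beta : R) (Phi : Sigma -> R) : Sigma -> R :=
  fun x => exp (- beta * H (scons false x)) * Phi (scons false x)
         + exp (- beta * H (scons true x)) * Phi (scons true x).

Definition is_normalized_eigenfunction (H : Sigma -> R) (beta lam : R)
  (Phi : Sigma -> R) : Prop :=
  continuous_Sigma Phi /\ (forall x, 0 < Phi x) /\
  (forall x, Phi x <= 1) /\ (exists x, Phi x = 1) /\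
  (forall x, transfer H beta Phi x = lam * Phi x).

(* Borel probability measures on the compact metric space Sigma, represented
   (Riesz) as positive normalized linear functionals on C(Sigma). *)
Definition prob_functional (nu : (Sigma -> R) -> R) : Prop :=
  (forall f g a b, continuous_Sigma f -> continuous_Sigma g ->
     nu (fun x => a * f x + b * g x) = a * nu f + b * nu g) /\
  (forall f, continuous_Sigma f -> (forall x, 0 <= f x) -> 0 <= nu f) /\
  nu (fun _ => 1) = 1.

Definition is_eigenmeasure (H : Sigma -> R) (beta lam : R)
  (nu : (Sigma -> R) -> R) : Prop :=
  prob_functional nu /\
  (forall f, continuous_Sigma f -> nu (transfer H beta f) = lam * nu f).

(* k-th term (k >= 1) of F^i_beta(lam) = sum_{k>=1} lam^{-k} e^{-beta h_k},
   reindexed from 0 for infinite_sum *)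
Definition F_term (h : nat -> R) (beta lam : R) (k : nat) : R :=
  / lam ^ (S k) * exp (- beta * h (S k)).

(* Write b' for the symbol opposite to b and T^i_k for the terms of F^i.  On the indicator of
   [b b'^k b] the transfer operator acts by the weight exp(-beta h^b_k), so the eigenmeasure
   satisfies nu[b b'^(k+1) b] = T^b_k nu[b' b]; summing over k gives nu[b b'] >= F^b nu[b' b],
   and since nu[01] + nu[10] = 1 - 1/lam > 0 this forces F^0 F^1 <= 1.
   Iterating the eigenfunction equation on [b b'] gives Phi(x) = sum_k T^b'_k Phi(b' b^k x).
   The points b' b^k x approach b' b^oo uniformly in x, so the oscillation of Phi on [b b'] is
   at most a times its oscillation on [b' b] plus (F^b' - a) eps, for a partial sum a < F^b'.
   With F^0 F^1 <= 1 both oscillations must vanish: Phi is constant on [01] and on [10], the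
   series give the two relations between Phi(01) and Phi(10), hence F^0 F^1 = 1, and the
   measure inequalities become equalities. *)

From Stdlib Require Import Reals Lra Lia List Bool FunctionalExtensionality.
Open Scope R_scope.

Fixpoint prefixb (w : list bool) (x : Sigma) : bool :=
  match w with
  | nil => true
  | c :: w' => Bool.eqb (x O) c && prefixb w' (fun n => x (S n))
  end.

Definition cyl_ind (w : list bool) (x : Sigma) : R := if prefixb w x then 1 else 0.

Lemma prefixb_agree w : forall x y, agree (length w) x y -> prefixb w x = prefixb w y.
Proof.
  induction w as [|c w IH]; intros x y Hxy; simpl; auto.
  rewrite (Hxy O) by (simpl; lia).
  rewrite (IH (fun n => x (S n)) (fun n => y (S n))); auto.
  intros i Hi; apply Hxy; simpl; lia.
Qed.

Lemma cyl_ind_continuous w : continuous_Sigma (cyl_ind w).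
Proof.
  intros x eps Heps; exists (length w); intros y Hy.
  unfold cyl_ind; rewrite (prefixb_agree w x y Hy).
  unfold Rminus; rewrite Rplus_opp_r, Rabs_R0; lra.
Qed.

Lemma cyl_ind_ge0 w x : 0 <= cyl_ind w x.
Proof. unfold cyl_ind; destruct (prefixb w x); lra. Qed.

Lemma cyl_ind_snoc w c x :
  cyl_ind w x = cyl_ind (w ++ c :: nil) x + cyl_ind (w ++ negb c :: nil) x.
Proof.
  revert x; induction w as [|d w IH]; intros x; unfold cyl_ind; simpl.
  - destruct (x O), c; simpl; lra.
  - destruct (Bool.eqb (x O) d); simpl; [apply IH | lra].
Qed.

Lemma prefixb_repeat_snoc c d k : forall x, prefixb (repeat c k ++ d :: nil) x = true ->
  (forall i, (i < k)%nat -> x i = c) /\ x k = d.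
Proof.
  induction k as [|k IH]; intros x Hp; simpl in Hp; apply andb_prop in Hp as [Hx0 Hp];
    apply Bool.eqb_prop in Hx0.
  - split; [intros; lia | exact Hx0].
  - destruct (IH _ Hp) as [Hrun Hlast]. split; [|exact Hlast].
    intros [|i] Hi; [exact Hx0 | apply Hrun; lia].
Qed.

Lemma ind01_cyl_ind : ind01 = cyl_ind (false :: true :: nil).
Proof.
  apply functional_extensionality; intros x; unfold ind01, cyl_ind; simpl.
  destruct (x O), (x 1%nat); reflexivity.
Qed.

Lemma ind10_cyl_ind : ind10 = cyl_ind (true :: false :: nil).
Proof.
  apply functional_extensionality; intros x; unfold ind10, cyl_ind; simpl.
  destruct (x O), (x 1%nat); reflexivity.
Qed.

Lemma transfer_cyl_ind H beta c w x :
  transfer H beta (cyl_ind (c :: w)) x = exp (- beta * H (scons c x)) * cyl_ind w x.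
Proof.
  unfold transfer, cyl_ind; destruct c; simpl; rewrite ?Rmult_0_r, ?Rplus_0_r, ?Rplus_0_l;
    reflexivity.
Qed.

Lemma transferE H beta Phi b x :
  transfer H beta Phi x = exp (- beta * H (scons b x)) * Phi (scons b x)
    + exp (- beta * H (scons (negb b) x)) * Phi (scons (negb b) x).
Proof. destruct b; unfold transfer; simpl; ring. Qed.

Section ProbFunctional.
Variable nu : (Sigma -> R) -> R.
Hypothesis nu_prob : prob_functional nu.

Lemma pf_add f g : continuous_Sigma f -> continuous_Sigma g ->
  nu (fun x => f x + g x) = nu f + nu g.
Proof.
  intros Hf Hg. destruct nu_prob as [Hlin _].
  replace (fun x => f x + g x) with (fun x => 1 * f x + 1 * g x)
    by (apply functional_extensionality; intros; ring).
  rewrite Hlin by assumption; ring.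
Qed.

Lemma pf_scale f a : continuous_Sigma f -> nu (fun x => a * f x) = a * nu f.
Proof.
  intros Hf. destruct nu_prob as [Hlin _].
  replace (fun x => a * f x) with (fun x => a * f x + 0 * f x)
    by (apply functional_extensionality; intros; ring).
  rewrite Hlin by assumption; ring.
Qed.

Lemma pf_cyl_ind_nil : nu (cyl_ind nil) = 1.
Proof. exact (proj2 (proj2 nu_prob)). Qed.

Lemma pf_cyl_ind_snoc w c :
  nu (cyl_ind w) = nu (cyl_ind (w ++ c :: nil)) + nu (cyl_ind (w ++ negb c :: nil)).
Proof.
  rewrite <- pf_add by apply cyl_ind_continuous.
  f_equal; apply functional_extensionality; intros; apply cyl_ind_snoc.
Qed.

Lemma pf_cyl_ind_ge0 w : 0 <= nu (cyl_ind w).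
Proof.
  apply (proj1 (proj2 nu_prob)); [apply cyl_ind_continuous | apply cyl_ind_ge0].
Qed.

End ProbFunctional.

Lemma Un_cv_const c : Un_cv (fun _ => c) c.
Proof. intros eps Heps; exists O; intros; unfold R_dist; rewrite Rminus_diag, Rabs_R0; lra. Qed.

Lemma inv_lt_1 r : 1 < r -> 0 < / r < 1.
Proof.
  intros Hr; split; [apply Rinv_0_lt_compat; lra|].
  rewrite <- Rinv_1; apply Rinv_lt_contravar; lra.
Qed.

Lemma F_term_pos h beta lam k : 0 < lam -> 0 < F_term h beta lam k.
Proof.
  intros Hlam; unfold F_term.
  apply Rmult_lt_0_compat; [apply Rinv_0_lt_compat, pow_lt; lra | apply exp_pos].
Qed.

Lemma F_term_le_pow h beta lam k : 1 < lam -> 0 <= beta -> 0 <= h (S k) ->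
  F_term h beta lam k <= (/ lam) ^ k.
Proof.
  intros Hlam Hbeta Hh; unfold F_term.
  pose proof (inv_lt_1 _ Hlam) as Hinv.
  assert (Hexp : exp (- beta * h (S k)) <= 1).
  { rewrite <- exp_0. destruct (Rle_lt_or_eq_dec (- beta * h (S k)) 0) as [Hlt|Heq]; [nra| |].
    - left; apply exp_increasing, Hlt.
    - rewrite Heq; lra. }
  rewrite <- pow_inv; simpl.
  pose proof (pow_lt (/ lam) k (proj1 Hinv)).
  pose proof (exp_pos (- beta * h (S k))).
  assert (/ lam * exp (- beta * h (S k)) <= 1) by nra. nra.
Qed.

Lemma F_term_summable h beta lam : 1 < lam -> 0 <= beta -> (forall k, 0 <= h (S k)) ->
  exists F, infinite_sum (F_term h beta lam) F.
Proof.
  intros Hlam Hbeta Hh.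
  pose proof (inv_lt_1 _ Hlam) as Hinv.
  destruct (Rseries_CV_comp (F_term h beta lam) (fun k => (/ lam) ^ k)) as [F HF].
  - intros k; split; [left; apply F_term_pos; lra | apply F_term_le_pow; auto].
  - exists (/ (1 - / lam)).
    apply (Un_cv_ext (fun n => sum_f_R0 (fun k => 1 * (/ lam) ^ k) n)).
    + intros n; apply sum_eq; intros; ring.
    + apply GP_infinite; rewrite Rabs_right; lra.
  - exists F; exact HF.
Qed.

Lemma F_term_partial_lt h beta lam F N : 0 < lam -> infinite_sum (F_term h beta lam) F ->
  sum_f_R0 (F_term h beta lam) N < F.
Proof.
  intros Hlam HF.
  assert (Hpos : forall k, 0 <= F_term h beta lam k) by (intros; left; apply F_term_pos, Hlam).
  pose proof (sum_incr _ (S N) F HF Hpos) as Hle.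
  rewrite tech5 in Hle. pose proof (F_term_pos h beta lam (S N) Hlam). lra.
Qed.

Lemma F_term_sum_pos h beta lam F : 0 < lam -> infinite_sum (F_term h beta lam) F -> 0 < F.
Proof.
  intros Hlam HF. pose proof (F_term_partial_lt h beta lam F O Hlam HF); simpl in *.
  pose proof (F_term_pos h beta lam O Hlam). lra.
Qed.

Lemma le_of_le_pow_add r d c N : 0 <= r < 1 -> (forall m, (N <= m)%nat -> d <= r ^ m + c) ->
  d <= c.
Proof.
  intros Hr Hd. destruct (Rle_dec d c) as [|Hnot]; auto. exfalso.
  destruct (pow_lt_1_zero r ltac:(rewrite Rabs_right; lra) (d - c)) as [N' HN']; [lra|].
  specialize (HN' (max N N') ltac:(lia)). specialize (Hd (max N N') ltac:(lia)).
  pose proof (Rle_abs (r ^ max N N')). lra.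
Qed.

Lemma sum_split_bound (T g : nat -> R) (F M e : R) (N m : nat) :
  (forall k, 0 <= T k) -> infinite_sum T F -> 0 <= e ->
  (forall k, (k <= N)%nat -> Rabs (g k) <= T k * M) ->
  (forall k, (N < k)%nat -> Rabs (g k) <= T k * e) ->
  (N < m)%nat ->
  Rabs (sum_f_R0 g m) <= sum_f_R0 T N * M + (F - sum_f_R0 T N) * e.
Proof.
  intros HT HF He Hhead Htail Hm.
  assert (Hsplit : forall u : nat -> R,
    sum_f_R0 u m = sum_f_R0 u N + sum_f_R0 (fun i => u (S N + i)%nat) (m - S N))
    by (intros; apply tech2, Hm).
  eapply Rle_trans; [apply sum_f_R0_triangle|]. rewrite Hsplit.
  apply Rplus_le_compat.
  - rewrite Rmult_comm, scal_sum. apply sum_Rle; intros k Hk; apply Hhead, Hk.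
  - apply Rle_trans with (sum_f_R0 (fun i => T (S N + i)%nat) (m - S N) * e).
    + rewrite Rmult_comm, scal_sum. apply sum_Rle; intros k _; apply Htail; lia.
    + apply Rmult_le_compat_r; [exact He|].
      pose proof (sum_incr T m F HF HT) as Hle. rewrite Hsplit in Hle. lra.
Qed.

(* Only the strict inequality [a < F] lets two mutual bounds force [M = 0] when [F0 * F1 = 1]. *)
Definition dominated (M F M' : R) : Prop :=
  forall eps, 0 < eps -> exists a, 0 <= a < F /\ M <= a * M' + (F - a) * eps.

Lemma dominated_by_0 M F : dominated M F 0 -> M <= 0.
Proof.
  intros Hdom. destruct (Rle_dec M 0) as [|Hpos]; auto. exfalso.
  destruct (Hdom 1 Rlt_0_1) as [a0 [Ha0 _]].
  destruct (Hdom (M / (2 * F))) as [a [Ha HM]]; [apply Rdiv_lt_0_compat; lra|].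
  assert (HFe : F * (M / (2 * F)) = M / 2) by (field; lra).
  assert (0 < M / (2 * F)) by (apply Rdiv_lt_0_compat; lra).
  nra.
Qed.

Lemma dominated_lt M F M' : dominated M F M' -> 0 < M' -> M < F * M'.
Proof.
  intros Hdom HM'. destruct (Hdom (M' / 2)) as [a [Ha HM]]; [lra|]. nra.
Qed.

Lemma mutually_dominated_0 M0 M1 F0 F1 : 0 <= M0 -> 0 <= M1 -> 0 < F1 -> F0 * F1 <= 1 ->
  dominated M0 F1 M1 -> dominated M1 F0 M0 -> M0 = 0 /\ M1 = 0.
Proof.
  intros HM0 HM1 HF1 HFF H01 H10.
  destruct (Req_dec M1 0) as [E1|N1].
  - subst M1. pose proof (dominated_by_0 _ _ H01). lra.
  - pose proof (dominated_lt _ _ _ H01 ltac:(lra)).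
    destruct (Req_dec M0 0) as [E0|N0].
    + subst M0. pose proof (dominated_by_0 _ _ H10). lra.
    + pose proof (dominated_lt _ _ _ H10 ltac:(lra)). exfalso. nra.
Qed.

Definition cyl2 (b : bool) (x : Sigma) : Prop := x O = b /\ x 1%nat = negb b.

Definition osc_set (Phi : Sigma -> R) (b : bool) (d : R) : Prop :=
  exists x x', cyl2 b x /\ cyl2 b x' /\ d = Rabs (Phi x - Phi x').

Definition barrier (h0 h1 : nat -> R) (b : bool) : nat -> R := if b then h1 else h0.

Fixpoint prepend (m : nat) (b : bool) (x : Sigma) : Sigma :=
  match m with O => x | S m => scons b (prepend m b x) end.

Lemma prepend_lt m b x i : (i < m)%nat -> prepend m b x i = b.
Proof.
  revert i; induction m as [|m IH]; intros [|i] Hi; simpl; auto; try lia.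
  apply IH; lia.
Qed.

Lemma prepend_add m b x j : prepend m b x (m + j)%nat = x j.
Proof. induction m as [|m IH]; simpl; auto. Qed.

Lemma prepend_head m b x : x O = b -> prepend m b x O = b.
Proof. destruct m; simpl; auto. Qed.

Lemma agree_scons_prepend b k N y : (N <= S k)%nat ->
  agree N (scons (negb b) (fun _ => b)) (scons (negb b) (prepend k b y)).
Proof.
  intros Hk [|i] Hi; [reflexivity|]. simpl. symmetry; apply prepend_lt; lia.
Qed.

Lemma cyl2_scons_prepend b m x : cyl2 b x -> cyl2 (negb b) (scons (negb b) (prepend m b x)).
Proof.
  intros [Hx0 _]. split; [reflexivity|]. simpl. rewrite negb_involutive.
  apply prepend_head, Hx0.
Qed.

Section DoubleWell.

Variables (H : Sigma -> R) (h0 h1 : nat -> R) (beta lam : R).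
Hypothesis H_flat : forall x, x O = x 1%nat -> H x = 0.
Hypothesis H_barrier :
  forall b n, (1 <= n)%nat -> forall x, cyl_well b n x -> H x = barrier h0 h1 b n.

Lemma transfer_cyl_ind_flat b w x :
  transfer H beta (cyl_ind (b :: b :: w)) x = cyl_ind (b :: w) x.
Proof.
  rewrite transfer_cyl_ind. unfold cyl_ind at 1 2.
  destruct (prefixb (b :: w) x) eqn:E; [|ring].
  rewrite H_flat, Rmult_0_r, exp_0; [ring|].
  simpl in E |- *. apply andb_prop in E as [E _]. symmetry; apply Bool.eqb_prop, E.
Qed.

Lemma transfer_cyl_ind_barrier b k x : (1 <= k)%nat ->
  transfer H beta (cyl_ind (b :: repeat (negb b) k ++ b :: nil)) x
  = exp (- beta * barrier h0 h1 b k) * cyl_ind (repeat (negb b) k ++ b :: nil) x.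
Proof.
  intros Hk. rewrite transfer_cyl_ind. unfold cyl_ind at 1 2.
  destruct (prefixb (repeat (negb b) k ++ b :: nil) x) eqn:E; [|ring].
  destruct (prefixb_repeat_snoc _ _ _ _ E) as [Hrun Hlast].
  rewrite (H_barrier b k Hk); [reflexivity|].
  split; [reflexivity|split; [|exact Hlast]].
  intros [|i] Hi; [lia|]. apply Hrun; lia.
Qed.

Section Eigenmeasure.

Variable nu : (Sigma -> R) -> R.
Hypothesis nu_eigen : is_eigenmeasure H beta lam nu.
Hypothesis lam_gt_1 : 1 < lam.

Lemma nu_cyl_ind_flat b w : lam * nu (cyl_ind (b :: b :: w)) = nu (cyl_ind (b :: w)).
Proof.
  destruct nu_eigen as [_ Hnu]. rewrite <- Hnu by apply cyl_ind_continuous.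
  f_equal; apply functional_extensionality; intros; apply transfer_cyl_ind_flat.
Qed.

Lemma nu_cyl_ind_run b j :
  nu (cyl_ind (repeat (negb b) (S j) ++ b :: nil))
  = (/ lam) ^ j * nu (cyl_ind (negb b :: b :: nil)).
Proof.
  induction j as [|j IH]; [simpl; ring|].
  pose proof (nu_cyl_ind_flat (negb b) (repeat (negb b) j ++ b :: nil)) as E.
  simpl in E, IH |- *. rewrite Rmult_assoc, <- IH, <- E. field; lra.
Qed.

Lemma nu_cyl_ind_excursion b k :
  nu (cyl_ind (b :: repeat (negb b) (S k) ++ b :: nil))
  = F_term (barrier h0 h1 b) beta lam k * nu (cyl_ind (negb b :: b :: nil)).
Proof.
  destruct nu_eigen as [Hprob Hnu].
  assert (E : lam * nu (cyl_ind (b :: repeat (negb b) (S k) ++ b :: nil))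
              = exp (- beta * barrier h0 h1 b (S k))
                * nu (cyl_ind (repeat (negb b) (S k) ++ b :: nil))).
  { rewrite <- Hnu, <- pf_scale by (auto; apply cyl_ind_continuous).
    f_equal; apply functional_extensionality; intros.
    apply transfer_cyl_ind_barrier; lia. }
  rewrite nu_cyl_ind_run in E. unfold F_term. rewrite <- pow_inv.
  apply Rmult_eq_reg_l with lam; [|lra]. rewrite E. simpl. field. lra.
Qed.

Lemma nu_cyl2_decomp b N :
  nu (cyl_ind (b :: negb b :: nil))
  = sum_f_R0 (fun k => nu (cyl_ind (b :: repeat (negb b) (S k) ++ b :: nil))) N
    + nu (cyl_ind (b :: repeat (negb b) (S (S N)))).
Proof.
  pose proof (proj1 nu_eigen) as Hprob.
  induction N as [|N IH].
  - exact (pf_cyl_ind_snoc nu Hprob (b :: negb b :: nil) b).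
  - rewrite IH, (pf_cyl_ind_snoc nu Hprob (b :: repeat (negb b) (S (S N))) b).
    simpl sum_f_R0. change ((b :: ?w) ++ negb b :: nil) with (b :: (w ++ negb b :: nil)).
    rewrite <- repeat_cons. simpl; ring.
Qed.

Lemma nu_cyl2_ge b F : infinite_sum (F_term (barrier h0 h1 b) beta lam) F ->
  F * nu (cyl_ind (negb b :: b :: nil)) <= nu (cyl_ind (b :: negb b :: nil)).
Proof.
  intros HF.
  apply Rle_cv_lim with
    (fun N => sum_f_R0 (F_term (barrier h0 h1 b) beta lam) N * nu (cyl_ind (negb b :: b :: nil)))
    (fun _ => nu (cyl_ind (b :: negb b :: nil))).
  - intros N. rewrite (nu_cyl2_decomp b N), Rmult_comm, scal_sum.
    rewrite (sum_eq _ _ N (fun k _ => nu_cyl_ind_excursion b k)).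
    pose proof (pf_cyl_ind_ge0 nu (proj1 nu_eigen) (b :: repeat (negb b) (S (S N)))). lra.
  - apply CV_mult; [exact HF | apply Un_cv_const].
  - apply Un_cv_const.
Qed.

Lemma nu_cyl2_sum :
  nu (cyl_ind (false :: true :: nil)) + nu (cyl_ind (true :: false :: nil)) = 1 - / lam.
Proof.
  pose proof (proj1 nu_eigen) as Hprob.
  pose proof (pf_cyl_ind_snoc nu Hprob nil false) as E.
  pose proof (pf_cyl_ind_snoc nu Hprob (false :: nil) false) as E0.
  pose proof (pf_cyl_ind_snoc nu Hprob (true :: nil) true) as E1.
  pose proof (nu_cyl_ind_flat false nil). pose proof (nu_cyl_ind_flat true nil).
  rewrite pf_cyl_ind_nil in E by exact Hprob. simpl in E, E0, E1.
  apply Rmult_eq_reg_l with lam; [|lra]. field_simplify; [nra|lra].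
Qed.

Lemma F_product_le_1 F0 F1 :
  infinite_sum (F_term h0 beta lam) F0 -> infinite_sum (F_term h1 beta lam) F1 ->
  F0 * F1 <= 1.
Proof.
  intros HF0 HF1.
  pose proof (nu_cyl2_ge false F0 HF0) as G0. pose proof (nu_cyl2_ge true F1 HF1) as G1.
  pose proof nu_cyl2_sum as Hsum. simpl in G0, G1.
  set (n01 := nu (cyl_ind (false :: true :: nil))) in *.
  set (n10 := nu (cyl_ind (true :: false :: nil))) in *.
  pose proof (F_term_sum_pos h0 beta lam F0 ltac:(lra) HF0).
  pose proof (F_term_sum_pos h1 beta lam F1 ltac:(lra) HF1).
  pose proof (inv_lt_1 _ lam_gt_1).
  pose proof (pf_cyl_ind_ge0 nu (proj1 nu_eigen) (true :: false :: nil)).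
  assert (Hn01 : 0 < n01).
  { destruct (Rlt_le_dec 0 n01) as [|Hle]; [assumption|].
    assert (F0 * n10 <= 0) by lra. assert (n10 <= 0) by nra. lra. }
  nra.
Qed.

Lemma nu_cyl2_ratios F0 F1 :
  infinite_sum (F_term h0 beta lam) F0 -> infinite_sum (F_term h1 beta lam) F1 ->
  F0 * F1 = 1 ->
  nu (cyl_ind (false :: true :: nil)) = F0 * nu (cyl_ind (true :: false :: nil)) /\
  nu (cyl_ind (true :: false :: nil)) = F1 * nu (cyl_ind (false :: true :: nil)).
Proof.
  intros HF0 HF1 HFF.
  pose proof (nu_cyl2_ge false F0 HF0) as G0. pose proof (nu_cyl2_ge true F1 HF1) as G1.
  simpl in G0, G1.
  pose proof (F_term_sum_pos h0 beta lam F0 ltac:(lra) HF0).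
  pose proof (F_term_sum_pos h1 beta lam F1 ltac:(lra) HF1).
  split.
  - assert (E : F0 * (F1 * nu (cyl_ind (false :: true :: nil)))
                <= F0 * nu (cyl_ind (true :: false :: nil))) by (apply Rmult_le_compat_l; lra).
    rewrite <- Rmult_assoc, HFF, Rmult_1_l in E. lra.
  - assert (E : F1 * (F0 * nu (cyl_ind (true :: false :: nil)))
                <= F1 * nu (cyl_ind (false :: true :: nil))) by (apply Rmult_le_compat_l; lra).
    rewrite <- Rmult_assoc, (Rmult_comm F1), HFF, Rmult_1_l in E. lra.
Qed.

End Eigenmeasure.

Section Eigenfunction.

Variable Phi : Sigma -> R.
Hypothesis Phi_eigen : is_normalized_eigenfunction H beta lam Phi.

Lemma eigenvalue_gt_1 : 1 < lam.
Proof.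
  destruct Phi_eigen as (_ & Hpos & _ & _ & Heig).
  set (z := fun _ : nat => false).
  specialize (Heig z). unfold transfer in Heig.
  assert (Ez : scons false z = z) by (apply functional_extensionality; intros [|n]; reflexivity).
  rewrite Ez, (H_flat z eq_refl), Rmult_0_r, exp_0, Rmult_1_l in Heig.
  pose proof (Hpos z). pose proof (Hpos (scons true z)).
  pose proof (exp_pos (- beta * H (scons true z))). nra.
Qed.

Lemma Phi_step b m x : cyl2 b x ->
  Phi (prepend m b x) = / lam * Phi (prepend (S m) b x)
    + / lam * exp (- beta * barrier h0 h1 (negb b) (S m)) * Phi (scons (negb b) (prepend m b x)).
Proof.
  intros [Hx0 Hx1].
  destruct Phi_eigen as (_ & _ & _ & _ & Heig).
  pose proof eigenvalue_gt_1 as Hlam.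
  pose proof (Heig (prepend m b x)) as E. rewrite (transferE H beta Phi b) in E.
  rewrite H_flat, Rmult_0_r, exp_0, Rmult_1_l in E by (symmetry; apply prepend_head, Hx0).
  rewrite (H_barrier (negb b) (S m) ltac:(lia)) in E.
  - simpl. apply Rmult_eq_reg_l with lam; [|lra]. rewrite <- E. field. lra.
  - split; [reflexivity|split].
    + intros [|i] Hi; [lia|]. simpl. rewrite negb_involutive.
      destruct (Nat.eq_dec i m) as [->|Hne].
      * rewrite <- (Nat.add_0_r m) at 2. rewrite prepend_add. exact Hx0.
      * apply prepend_lt; lia.
    + simpl. rewrite <- Nat.add_1_r, prepend_add. exact Hx1.
Qed.

Lemma Phi_expand b x m : cyl2 b x ->
  Phi x = (/ lam) ^ S m * Phi (prepend (S m) b x)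
    + sum_f_R0 (fun k => F_term (barrier h0 h1 (negb b)) beta lam k
                         * Phi (scons (negb b) (prepend k b x))) m.
Proof.
  intros Hx. pose proof eigenvalue_gt_1 as Hlam.
  induction m as [|m IH].
  - rewrite (Phi_step b 0 x Hx) at 1. unfold F_term. simpl. field. lra.
  - rewrite IH, (Phi_step b (S m) x Hx), tech5. unfold F_term at 3. rewrite !pow_inv.
    simpl. field. split; [apply pow_nonzero|]; lra.
Qed.

Lemma Phi_series b x : cyl2 b x ->
  infinite_sum (fun k => F_term (barrier h0 h1 (negb b)) beta lam k
                         * Phi (scons (negb b) (prepend k b x))) (Phi x).
Proof.
  intros Hx eps Heps.
  pose proof (inv_lt_1 _ eigenvalue_gt_1) as Hinv.
  destruct (pow_lt_1_zero (/ lam) ltac:(rewrite Rabs_right; lra) eps Heps) as [N HN].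
  exists N; intros n Hn. unfold R_dist.
  rewrite (Phi_expand b x n Hx).
  match goal with |- Rabs (?S - (?q + ?S)) < _ => replace (S - (q + S)) with (- q) by ring end.
  rewrite Rabs_Ropp, Rabs_mult, (Rabs_right (Phi _)).
  - destruct Phi_eigen as (_ & Hpos & Hle & _).
    specialize (HN (S n) ltac:(lia)). pose proof (Hpos (prepend (S n) b x)).
    pose proof (Hle (prepend (S n) b x)). pose proof (Rabs_pos ((/ lam) ^ S n)). nra.
  - left; apply Phi_eigen.
Qed.

Lemma Phi_diff_le_1 x x' : Rabs (Phi x - Phi x') <= 1.
Proof.
  destruct Phi_eigen as (_ & Hpos & Hle & _).
  pose proof (Hpos x); pose proof (Hpos x'); pose proof (Hle x); pose proof (Hle x').
  apply Rabs_le; lra.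
Qed.

Lemma osc_set_lub b : exists M, is_lub (osc_set Phi b) M /\ 0 <= M.
Proof.
  set (p := scons b (scons (negb b) (fun _ => b))).
  assert (Hp : osc_set Phi b 0).
  { exists p, p; repeat split; rewrite Rminus_diag, Rabs_R0; reflexivity. }
  destruct (completeness (osc_set Phi b)) as [M HM].
  - exists 1. intros d (x & x' & _ & _ & ->). apply Phi_diff_le_1.
  - exists 0; exact Hp.
  - exists M; split; [exact HM | apply (proj1 HM), Hp].
Qed.

Lemma osc_set_dominated b F M M' :
  infinite_sum (F_term (barrier h0 h1 (negb b)) beta lam) F ->
  is_lub (osc_set Phi b) M -> is_lub (osc_set Phi (negb b)) M' -> dominated M F M'.
Proof.
  intros HF HM HM' eps Heps.
  destruct Phi_eigen as [Hcont _].
  pose proof eigenvalue_gt_1 as Hlam. pose proof (inv_lt_1 _ Hlam) as Hinv.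
  set (T := F_term (barrier h0 h1 (negb b)) beta lam) in *.
  assert (HT : forall k, 0 <= T k) by (intros; left; apply F_term_pos; lra).
  destruct (Hcont (scons (negb b) (fun _ => b)) (eps / 2)) as [N HN]; [lra|].
  exists (sum_f_R0 T N).
  split; [split; [apply cond_pos_sum, HT | apply F_term_partial_lt; [lra | exact HF]]|].
  apply (proj2 HM). intros d (x & x' & Hx & Hx' & ->).
  apply (le_of_le_pow_add (/ lam) _ _ (S (S N))); [lra|]. intros [|m] Hm; [lia|].
  rewrite (Phi_expand b x m Hx), (Phi_expand b x' m Hx'). fold T.
  match goal with |- Rabs (?q + ?S - (?q' + ?S')) <= _ =>
    replace (q + S - (q' + S')) with ((q - q') + (S - S')) by ring end.
  rewrite <- minus_sum. eapply Rle_trans; [apply Rabs_triang|].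
  apply Rplus_le_compat.
  - rewrite <- Rmult_minus_distr_l, Rabs_mult, Rabs_right by (apply Rle_ge, pow_le; lra).
    rewrite <- (Rmult_1_r ((/ lam) ^ S m)) at 2.
    apply Rmult_le_compat_l; [apply pow_le; lra | apply Phi_diff_le_1].
  - apply (sum_split_bound T _ F M' eps N m HT HF); [lra| | |lia];
      intros k Hk; cbv beta;
      rewrite <- Rmult_minus_distr_l, Rabs_mult, (Rabs_right (T k)) by (apply Rle_ge, HT);
      apply Rmult_le_compat_l; try apply HT.
    + apply (proj1 HM').
      exists (scons (negb b) (prepend k b x)), (scons (negb b) (prepend k b x')).
      repeat split; try apply cyl2_scons_prepend; assumption.
    + pose proof (HN _ (agree_scons_prepend b k N x ltac:(lia))) as Hnear.
      pose proof (HN _ (agree_scons_prepend b k N x' ltac:(lia))) as Hnear'.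
      apply Rabs_def2 in Hnear, Hnear'. apply Rabs_le; lra.
Qed.

Lemma Phi_cyl2_const_of_osc_0 b : is_lub (osc_set Phi b) 0 ->
  forall y y', cyl2 b y -> cyl2 b y' -> Phi y = Phi y'.
Proof.
  intros HM y y' Hy Hy'.
  assert (Hd : Rabs (Phi y - Phi y') <= 0) by (apply (proj1 HM); exists y, y'; auto).
  pose proof (Rle_abs (Phi y - Phi y')). pose proof (Rle_abs (- (Phi y - Phi y'))).
  rewrite Rabs_Ropp in *. lra.
Qed.

Lemma Phi_cyl2_rel b F x y :
  (forall y y', cyl2 (negb b) y -> cyl2 (negb b) y' -> Phi y = Phi y') ->
  infinite_sum (F_term (barrier h0 h1 (negb b)) beta lam) F ->
  cyl2 b x -> cyl2 (negb b) y -> Phi x = F * Phi y.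
Proof.
  intros Hconst HF Hx Hy.
  apply (UL_sequence _ _ _ (Phi_series b x Hx)).
  apply (Un_cv_ext (fun n => sum_f_R0 (F_term (barrier h0 h1 (negb b)) beta lam) n * Phi y)).
  - intros n. rewrite Rmult_comm, scal_sum. apply sum_eq; intros k _.
    f_equal. apply Hconst; [exact Hy | apply cyl2_scons_prepend, Hx].
  - apply CV_mult; [exact HF | apply Un_cv_const].
Qed.

Lemma Phi_cyl2_relations F0 F1 :
  infinite_sum (F_term h0 beta lam) F0 -> infinite_sum (F_term h1 beta lam) F1 ->
  F0 * F1 <= 1 ->
  forall x y, cyl01 x -> cyl10 y -> Phi x = F1 * Phi y /\ Phi y = F0 * Phi x.
Proof.
  intros HF0 HF1 HFF x y Hx Hy.
  pose proof eigenvalue_gt_1 as Hlam.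
  destruct (osc_set_lub false) as [M0 [HM0 HM0pos]].
  destruct (osc_set_lub true) as [M1 [HM1 HM1pos]].
  destruct (mutually_dominated_0 M0 M1 F0 F1) as [E0 E1]; auto.
  - apply (F_term_sum_pos h1 beta lam); [lra | exact HF1].
  - exact (osc_set_dominated false F1 M0 M1 HF1 HM0 HM1).
  - exact (osc_set_dominated true F0 M1 M0 HF0 HM1 HM0).
  - subst M0 M1. split.
    + exact (Phi_cyl2_rel false F1 x y (Phi_cyl2_const_of_osc_0 true HM1) HF1 Hx Hy).
    + exact (Phi_cyl2_rel true F0 y x (Phi_cyl2_const_of_osc_0 false HM0) HF0 Hy Hx).
Qed.

Lemma F_product_eq_1 F0 F1 :
  infinite_sum (F_term h0 beta lam) F0 -> infinite_sum (F_term h1 beta lam) F1 ->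
  F0 * F1 <= 1 -> F0 * F1 = 1.
Proof.
  intros HF0 HF1 HFF.
  set (x := scons false (scons true (fun _ => true))).
  set (y := scons true (scons false (fun _ => false))).
  destruct (Phi_cyl2_relations F0 F1 HF0 HF1 HFF x y) as [R1 R2]; try split; try reflexivity.
  pose proof (proj1 (proj2 Phi_eigen) x) as Hx.
  rewrite R2 in R1. apply Rmult_eq_reg_r with (Phi x); lra.
Qed.

End Eigenfunction.
End DoubleWell.

Theorem corollary3p5 (H : Sigma -> R) (h0 h1 : nat -> R) (beta lam : R)
  (Phi : Sigma -> R) (nu : (Sigma -> R) -> R) :
  reduced_double_well H h0 h1 -> 0 < beta ->
  is_normalized_eigenfunction H beta lam Phi ->
  is_eigenmeasure H beta lam nu ->
  exists F0 F1 : R,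
    infinite_sum (F_term h0 beta lam) F0 /\
    infinite_sum (F_term h1 beta lam) F1 /\
    F0 * F1 = 1 /\
    (forall x y, cyl01 x -> cyl10 y ->
       Phi x = F1 * Phi y /\ Phi y = F0 * Phi x) /\
    nu ind01 = F0 * nu ind10 /\
    nu ind10 = F1 * nu ind01.
Proof.
  intros (_ & _ & _ & H_flat & Hw0 & Hw1 & _) Hbeta HPhi Hnu.
  assert (H_barrier : forall b n, (1 <= n)%nat ->
            forall x, cyl_well b n x -> H x = barrier h0 h1 b n)
    by (intros [|] n Hn; [apply Hw1 | apply Hw0]; exact Hn).
  pose proof (eigenvalue_gt_1 H beta lam H_flat Phi HPhi) as Hlam.
  destruct (F_term_summable h0 beta lam Hlam ltac:(lra)) as [F0 HF0].
  { intros k; apply Rlt_le, Hw0; lia. }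
  destruct (F_term_summable h1 beta lam Hlam ltac:(lra)) as [F1 HF1].
  { intros k; apply Rlt_le, Hw1; lia. }
  pose proof (F_product_le_1 H h0 h1 beta lam H_flat H_barrier nu Hnu Hlam F0 F1 HF0 HF1) as HFF.
  pose proof (F_product_eq_1 H h0 h1 beta lam H_flat H_barrier Phi HPhi F0 F1 HF0 HF1 HFF) as HF.
  destruct (nu_cyl2_ratios H h0 h1 beta lam H_flat H_barrier nu Hnu Hlam F0 F1 HF0 HF1 HF)
    as [Hnu01 Hnu10].
  exists F0, F1. rewrite ind01_cyl_ind, ind10_cyl_ind.
  refine (conj HF0 (conj HF1 (conj HF (conj _ (conj Hnu01 Hnu10))))).
  exact (Phi_cyl2_relations H h0 h1 beta lam H_flat H_barrier Phi HPhi F0 F1 HF0 HF1 HFF).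
Qed.
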